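(* Let $G$ be any game state and let $P$ be a game path starting at $G$ which does not follow the Split-First Strategy. Then either there exists a game path starting at $G$ that is strictly longer than $P$, or there exists a game path starting at $G$ that follows the Split-First Strategy and has the same length as $P$.
   Context: Fibonacci numbers are indexed by $F_1=1$, $F_2=2$, $F_{i+1}=F_i+F_{i-1}$. A game state is a finite multiset of Fibonacci numbers (tracked by index). The legal moves are: $C_1$: replace $F_1,F_1$ by $F_2$; for $i\ge 2$, $C_i$: replace $F_{i-1},F_i$ by $F_{i+1}$ (a ''combining move''); $S_2$: replace $F_2,F_2$ by $F_1,F_3$; for $i\ge 3$, $S_i$: replace $F_i,F_i$ by $F_{i-2},F_{i+1}$ (a ''splitting move''). Here $C_1$ is grouped with the splitting moves, and ''combining move'' means $C_i$ with $i\ge 2$. Every sequence of legal moves is finite. A game path from a state $G$ is a sequence of legal moves starting at $G$ and continuing until no legal move is available; its length is its number of moves. A game path follows the Split-First Strategy if at each state along it: whenever some splitting move or $C_1$ is available, the move taken is one of those (any choice); otherwise the move taken is the combining move $C_i$ ($i\ge 2$) with the smallest index $i$ among those available. *)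

From Stdlib Require Import Arith List Lia.
Import ListNotations.

(* A game state: a finite multiset of Fibonacci numbers, tracked by index.
   [G i] is the multiplicity of F_i (indices start at 1; index 0 unused). *)
Definition state := nat -> nat.

Definition is_state (G : state) : Prop :=
  G 0 = 0 /\ exists N, forall i, N <= i -> G i = 0.

Inductive move := Comb (i : nat) | Split (i : nat).

Definition addc (a : nat) (k : nat) (G : state) : state :=
  fun j => if Nat.eqb j a then G j + k else G j.
Definition subc (a : nat) (k : nat) (G : state) : state :=
  fun j => if Nat.eqb j a then G j - k else G j.

Definition legal (m : move) (G : state) : Prop :=
  match m with
  | Comb i => (i = 1 /\ 2 <= G 1) \/ (2 <= i /\ 1 <= G (i - 1) /\ 1 <= G i)
  | Split i => 2 <= i /\ 2 <= G i
  end.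

(* the state after applying move m (meaningful when m is legal) *)
Definition next (m : move) (G : state) : state :=
  match m with
  | Comb i =>
      if Nat.eqb i 1 then addc 2 1 (subc 1 2 G)
      else addc (i + 1) 1 (subc i 1 (subc (i - 1) 1 G))
  | Split i =>
      if Nat.eqb i 2 then addc 3 1 (addc 1 1 (subc 2 2 G))
      else addc (i + 1) 1 (addc (i - 2) 1 (subc i 2 G))
  end.

Fixpoint final (G : state) (ms : list move) : state :=
  match ms with
  | [] => G
  | m :: ms' => final (next m G) ms'
  end.

Fixpoint legal_seq (G : state) (ms : list move) : Prop :=
  match ms with
  | [] => True
  | m :: ms' => legal m G /\ legal_seq (next m G) ms'
  end.

Definition game_path (G : state) (ms : list move) : Prop :=
  legal_seq G ms /\ forall m, ~ legal m (final G ms).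

Definition split_class (m : move) : Prop :=
  match m with
  | Comb i => i = 1
  | Split _ => True
  end.

Definition sf_choice (G : state) (m : move) : Prop :=
  ((exists m', split_class m' /\ legal m' G) -> split_class m) /\
  (~ (exists m', split_class m' /\ legal m' G) ->
     exists i, m = Comb i /\ 2 <= i /\
       forall j, 2 <= j -> legal (Comb j) G -> i <= j).

Fixpoint follows_sf (G : state) (ms : list move) : Prop :=
  match ms with
  | [] => True
  | m :: ms' => sf_choice G m /\ follows_sf (next m G) ms'
  end.

(* If some game path from G is longer than P we are done; otherwise P is a
   longest path from G, and we show that among longest paths there is one
   following the Split-First Strategy.  This rests on two exchange arguments,
   each saying that a particular first move loses nothing:

   - a legal splitting move (or C_1) can always be played first: against any
     other first move m it either commutes, or m can be simulated by a
     sequence of at least one move starting with it ([split_first_no_loss]);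
   - when no splitting move is available, the combining move C_i of least
     index can be played first ([min_comb_first_no_loss]).  Along any path the
     state keeps a rigid shape ([comb_inv]): C_i stays the least combining
     move, and at most one isolated part of multiplicity 2 appears, far above i.

   Moves are analysed through their net effect on multiplicities
   ([consumed]/[produced]): two legal move sequences with the same net effect
   end in the same state, which gives commutation and all simulations. *)

From Stdlib Require Import Arith List Lia Classical FunctionalExtensionality Wf_nat.
Import ListNotations.

Definition consumed (m : move) (j : nat) : nat :=
  match m with
  | Comb i => if Nat.eqb i 1 then (if Nat.eqb j 1 then 2 else 0)
              else (if Nat.eqb j (i - 1) then 1 else 0) + (if Nat.eqb j i then 1 else 0)
  | Split i => if Nat.eqb j i then 2 else 0
  end.

Definition produced (m : move) (j : nat) : nat :=
  match m with
  | Comb i => if Nat.eqb i 1 then (if Nat.eqb j 2 then 1 else 0)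
              else (if Nat.eqb j (i + 1) then 1 else 0)
  | Split i => if Nat.eqb i 2 then (if Nat.eqb j 1 then 1 else 0) + (if Nat.eqb j 3 then 1 else 0)
               else (if Nat.eqb j (i - 2) then 1 else 0) + (if Nat.eqb j (i + 1) then 1 else 0)
  end.

Ltac decide_indices :=
  repeat (match goal with
          | |- context [Nat.eqb ?a ?b] =>
              first [ rewrite (proj2 (Nat.eqb_neq a b)) by lia
                    | rewrite (proj2 (Nat.eqb_eq a b)) by lia
                    | destruct (Nat.eqb_spec a b) ]
          end; cbv beta iota); try subst.

Lemma next_balance m X j :
  legal m X -> next m X j + consumed m j = X j + produced m j.
Proof.
  destruct m as [i|i]; simpl; intros H; unfold addc, subc, consumed, produced;
    decide_indices; lia.
Qed.

Lemma next_value m X j : legal m X -> next m X j = X j + produced m j - consumed m j.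
Proof. intros H; pose proof (next_balance m X j H); lia. Qed.

(* [lia] treats [X a] and [X b] as unrelated atoms even when [a = b] is provable;
   record such identifications as equations before calling it. *)
Ltac link_pair f a b :=
  lazymatch type of f with state =>
    tryif constr_eq a b then fail else
    lazymatch goal with
    | _ : f a = f b |- _ => fail
    | _ : f b = f a |- _ => fail
    | _ => assert (f a = f b) by (f_equal; lia)
    end
  end.

Ltac link_indices :=
  repeat match goal with
  | |- context [?f ?a] => match goal with
                          | |- context [f ?b] => link_pair f a b
                          | _ : context [f ?b] |- _ => link_pair f a b
                          end
  | _ : context [?f ?a] |- _ => match goal with
                                | _ : context [f ?b] |- _ => link_pair f a b
                                end
  end.

Ltac state_lia :=
  repeat match goal with
  | H : legal ?m ?Y |- context [next ?m ?Y ?j] => rewrite (next_value m Y j H)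
  end;
  unfold produced, consumed; decide_indices; cbn [legal] in *; link_indices; lia.

Fixpoint consumed_seq (ms : list move) (j : nat) : nat :=
  match ms with [] => 0 | m :: ms' => consumed m j + consumed_seq ms' j end.
Fixpoint produced_seq (ms : list move) (j : nat) : nat :=
  match ms with [] => 0 | m :: ms' => produced m j + produced_seq ms' j end.

Lemma final_balance X ms j :
  legal_seq X ms -> final X ms j + consumed_seq ms j = X j + produced_seq ms j.
Proof.
  revert X; induction ms as [|m ms IH]; intros X Hms; simpl in *; [lia|].
  destruct Hms as [Hm Hms].
  pose proof (IH _ Hms); pose proof (next_balance m X j Hm); lia.
Qed.

Lemma final_eq_of_balance X ms1 ms2 :
  legal_seq X ms1 -> legal_seq X ms2 ->
  (forall j, produced_seq ms1 j + consumed_seq ms2 j = produced_seq ms2 j + consumed_seq ms1 j) ->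
  final X ms1 = final X ms2.
Proof.
  intros H1 H2 Hbal; apply functional_extensionality; intro j.
  pose proof (final_balance X ms1 j H1); pose proof (final_balance X ms2 j H2);
    pose proof (Hbal j); lia.
Qed.

Lemma next_comm m1 m2 X :
  legal m1 X -> legal m2 (next m1 X) -> legal m2 X -> legal m1 (next m2 X) ->
  next m2 (next m1 X) = next m1 (next m2 X).
Proof.
  intros H1 H2 H3 H4.
  apply (final_eq_of_balance X [m1; m2] [m2; m1]); simpl; auto; intro j; lia.
Qed.

Lemma game_path_cons X m Q : game_path X (m :: Q) <-> legal m X /\ game_path (next m X) Q.
Proof. unfold game_path; simpl; tauto. Qed.

Lemma game_path_nil X m : game_path X [] -> ~ legal m X.
Proof. intros [_ H]; exact (H m). Qed.

Lemma game_path_app X ms P :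
  legal_seq X ms -> game_path (final X ms) P -> game_path X (ms ++ P).
Proof.
  revert X; induction ms as [|m ms IH]; intros X Hms HP; simpl in *; [exact HP|].
  apply game_path_cons; split; [|apply IH]; tauto.
Qed.

Definition commute_at (X : state) (s m : move) : Prop :=
  legal s (next m X) /\ legal m (next s X).

Definition simulates (X : state) (s m : move) : Prop :=
  exists ms, legal_seq X (s :: ms) /\ final X (s :: ms) = next m X.

Lemma extend_by_commutation X s m Q :
  legal s X -> legal m X -> commute_at X s m ->
  game_path (next m X) (s :: Q) -> game_path X (s :: m :: Q).
Proof.
  intros Hs Hm [Hsm Hms] HQ; apply game_path_cons in HQ as [_ HQ].
  apply game_path_cons; split; [exact Hs|]; apply game_path_cons; split; [exact Hms|].
  rewrite (next_comm s m X Hs Hms Hm Hsm); exact HQ.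
Qed.

Lemma extend_by_simulation X s m P :
  simulates X s m -> game_path (next m X) P ->
  exists Q, game_path X (s :: Q) /\ length P <= length Q.
Proof.
  intros [ms [Hms Hfin]] HP; exists (ms ++ P); split.
  - apply (game_path_app X (s :: ms) P Hms); rewrite Hfin; exact HP.
  - rewrite length_app; lia.
Qed.

Lemma legal_comb1 Y : 2 <= Y 1 -> legal (Comb 1) Y.
Proof. simpl; lia. Qed.
Lemma legal_comb j Y : 2 <= j -> 1 <= Y (j - 1) -> 1 <= Y j -> legal (Comb j) Y.
Proof. simpl; lia. Qed.
Lemma legal_split a Y : 2 <= a -> 2 <= Y a -> legal (Split a) Y.
Proof. simpl; lia. Qed.

Ltac prove_legal :=
  match goal with
  | |- legal (Comb 1) _ => apply legal_comb1
  | |- legal (Comb _) _ => apply legal_comb; [cbn [legal] in *; lia | |]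
  | |- legal (Split _) _ => apply legal_split; [cbn [legal] in *; lia |]
  end; state_lia.

(* Each legality proof is kept as a hypothesis for the later moves. *)
Lemma legal_seq_cons X m ms :
  legal m X -> (legal m X -> legal_seq (next m X) ms) -> legal_seq X (m :: ms).
Proof. simpl; auto. Qed.

Ltac prove_legal_seq :=
  lazymatch goal with
  | |- legal_seq _ [] => exact I
  | |- legal_seq _ (_ :: _) =>
      apply legal_seq_cons; [first [assumption | prove_legal] | intro; prove_legal_seq]
  end.

Ltac prove_simulation ms :=
  exists ms; split;
  [ prove_legal_seq
  | match goal with |- _ = next ?m ?Y => change (next m Y) with (final Y [m]) end;
    apply final_eq_of_balance;
    [ prove_legal_seq | prove_legal_seq
    | intro; cbn [produced_seq consumed_seq]; unfold produced, consumed; decide_indices; lia ] ].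

(* C_1 versus another first move: the only obstruction to commuting is C_2
   when exactly two copies of F_1 are present, and then S_2 reaches the same
   state as C_2 after C_1. *)
Lemma comb1_exchange X m :
  legal (Comb 1) X -> legal m X -> commute_at X (Comb 1) m \/ simulates X (Comb 1) m.
Proof.
  intros Hs Hm; destruct (classic (commute_at X (Comb 1) m)) as [Hc|Hn]; [left; exact Hc|right].
  destruct m as [j|b].
  - destruct (Nat.eq_dec j 1) as [->|Hj1]; [exists []; simpl; tauto|].
    destruct (classic (j = 2 /\ X 1 = 2)) as [[-> HX]|Hc].
    + prove_simulation [Split 2].
    + exfalso; apply Hn; split; prove_legal.
  - exfalso; apply Hn; split; prove_legal.
Qed.

(* S_a versus another first move: obstructions arise only when F_a has
   multiplicity 2 and the other move is S_a itself or uses F_a: C_{a+1} is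
   simulated by S_a, S_{a+1}, C_{a-1} and C_a by S_a, C_{a-1} (with C_1 in place
   of C_{a-1} when a = 2). *)
Lemma split_exchange X a m :
  legal (Split a) X -> legal m X -> commute_at X (Split a) m \/ simulates X (Split a) m.
Proof.
  intros Hs Hm; destruct (classic (commute_at X (Split a) m)) as [Hc|Hn]; [left; exact Hc|right].
  assert (Ha : 2 <= a /\ 2 <= X a) by (simpl in Hs; lia).
  destruct m as [j|b].
  - destruct (Nat.eq_dec j 1) as [->|Hj1]; [exfalso; apply Hn; split; prove_legal|].
    destruct (classic (X a = 2 /\ (a = j - 1 \/ a = j))) as [(HX & [Haj|Haj])|Hc];
      [| |exfalso; apply Hn; split; prove_legal].
    + assert (j = a + 1) by lia; subst j.
      destruct (Nat.eq_dec a 2) as [->|Ha2];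
        [prove_simulation [Split 3; Comb 1] | prove_simulation [Split (a + 1); Comb (a - 1)]].
    + subst j; destruct (Nat.eq_dec a 2) as [->|Ha2];
        [prove_simulation [Comb 1] | prove_simulation [Comb (a - 1)]].
  - destruct (Nat.eq_dec b a) as [->|Hba]; [exists []; simpl; tauto|].
    exfalso; apply Hn; split; prove_legal.
Qed.

Lemma split_class_exchange X s m :
  split_class s -> legal s X -> legal m X -> commute_at X s m \/ simulates X s m.
Proof.
  destruct s as [i|a]; simpl; intros Hs; [subst i; apply comb1_exchange | apply split_exchange].
Qed.

Lemma split_first_no_loss P X s :
  split_class s -> legal s X -> game_path X P ->
  exists Q, game_path X (s :: Q) /\ length P <= S (length Q).
Proof.
  revert X; induction P as [|m P IH]; intros X Hs Hl HP.
  - exfalso; exact (game_path_nil X s HP Hl).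
  - apply game_path_cons in HP as [Hm HP].
    destruct (split_class_exchange X s m Hs Hl Hm) as [Hc|Hsim].
    + destruct (IH (next m X) Hs (proj1 Hc) HP) as [Q [HQ Hlen]].
      exists (m :: Q); split; [apply extend_by_commutation; auto | simpl; lia].
    + destruct (extend_by_simulation X s m P Hsim HP) as [Q [HQ Hlen]].
      exists Q; split; [exact HQ | simpl; lia].
Qed.

Record comb_inv (X : state) (i : nat) : Prop := {
  ci_index : 2 <= i;
  ci_prev : X (i - 1) = 1;
  ci_cur : X i = 1;
  ci_low : forall k, 1 <= k <= i -> X k <= 1;
  ci_no_pair : forall k, 2 <= k < i -> X (k - 1) = 0 \/ X k = 0;
  ci_le2 : forall k, 1 <= k -> X k <= 2;
  ci_double_isolated : forall k, 1 <= k -> X k = 2 -> X (k - 1) = 0 /\ X (k - 2) = 0;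
  ci_double_unique : forall k k', 1 <= k -> 1 <= k' -> X k = 2 -> X k' = 2 -> k = k' }.

Lemma comb_inv_legal X i : comb_inv X i -> legal (Comb i) X.
Proof. intros HI; pose proof (ci_index _ _ HI); pose proof (ci_prev _ _ HI);
  pose proof (ci_cur _ _ HI); prove_legal. Qed.

(* A doubled part lies at least three indices above i, so splitting it does
   not touch F_{i-1} or F_i. *)
Lemma double_beyond X i k : comb_inv X i -> 1 <= k -> X k = 2 -> i + 3 <= k.
Proof.
  intros HI Hk Hk2.
  destruct (Nat.le_gt_cases k i) as [Hki|Hki]; [pose proof (ci_low _ _ HI k); lia|].
  destruct (ci_double_isolated _ _ HI k Hk Hk2) as [H1 H2].
  pose proof (ci_cur _ _ HI).
  assert (k <> i + 1) by (intros ->; replace (i + 1 - 1) with i in H1 by lia; lia).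
  assert (k <> i + 2) by (intros ->; replace (i + 2 - 2) with i in H2 by lia; lia).
  lia.
Qed.

(* Splitting the doubled part preserves the shape: only F_{k+1} may become
   doubled, and F_k, F_{k-1} are then empty. *)
Lemma comb_inv_after_split X i k :
  comb_inv X i -> 1 <= k -> X k = 2 -> comb_inv (next (Split k) X) i.
Proof.
  intros HI Hk Hk2; pose proof (double_beyond X i k HI Hk Hk2) as Hfar.
  destruct HI as [Hi Hprev Hcur Hlow Hpair Hle2 Hiso Huniq].
  assert (HS : legal (Split k) X) by prove_legal.
  destruct (Hiso k Hk Hk2) as [Hk_1 Hk_2].
  assert (Hsucc : X (k + 1) <= 1)
    by (pose proof (Hle2 (k + 1)); pose proof (Huniq k (k + 1)); lia).
  assert (Hnew : forall m, 1 <= m -> next (Split k) X m = 2 -> m = k + 1).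
  { intros m Hm; destruct (Nat.eq_dec m (k + 1)) as [|Hne]; [auto|].
    pose proof (Huniq k m); pose proof (Hle2 m); state_lia. }
  constructor; [lia|state_lia|state_lia| | | | |].
  - intros m Hm; pose proof (Hlow m Hm); state_lia.
  - intros m Hm; pose proof (Hpair m Hm); state_lia.
  - intros m Hm; pose proof (Hle2 m Hm); state_lia.
  - intros m Hm H2; pose proof (Hnew m Hm H2); subst m; split; state_lia.
  - intros m m' Hm Hm' H2 H2'; pose proof (Hnew m Hm H2); pose proof (Hnew m' Hm' H2'); lia.
Qed.

Lemma comb_inv_after_comb X i j :
  comb_inv X i -> (forall k, 1 <= k -> X k <= 1) -> legal (Comb j) X -> i + 2 <= j ->
  comb_inv (next (Comb j) X) i.
Proof.
  intros HI Hle1 HC Hj.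
  destruct HI as [Hi Hprev Hcur Hlow Hpair _ _ _].
  assert (Hnew : forall m, 1 <= m -> next (Comb j) X m = 2 -> m = j + 1).
  { intros m Hm; destruct (Nat.eq_dec m (j + 1)) as [|Hne]; [auto|].
    pose proof (Hle1 m Hm); state_lia. }
  constructor; [lia|state_lia|state_lia| | | | |].
  - intros m Hm; pose proof (Hlow m Hm); state_lia.
  - intros m Hm; pose proof (Hpair m Hm); state_lia.
  - intros m Hm; pose proof (Hle1 m Hm); state_lia.
  - intros m Hm H2; pose proof (Hnew m Hm H2); subst m.
    pose proof (Hle1 j); pose proof (Hle1 (j - 1)); split; state_lia.
  - intros m m' Hm Hm' H2 H2'; pose proof (Hnew m Hm H2); pose proof (Hnew m' Hm' H2'); lia.
Qed.

Lemma first_move_under_inv X i m :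
  comb_inv X i -> (forall k, 1 <= k -> X k <= 1) -> legal m X ->
  exists j, m = Comb j /\ i <= j.
Proof.
  intros HI Hle1 Hm; destruct m as [j|b]; simpl in Hm.
  - exists j; split; [reflexivity|].
    destruct (Nat.le_gt_cases i j) as [|Hji]; [auto|exfalso].
    pose proof (Hle1 1); pose proof (ci_no_pair _ _ HI j); lia.
  - pose proof (Hle1 b); lia.
Qed.

Lemma comb_shift_simulation X i :
  comb_inv X i -> (forall k, 1 <= k -> X k <= 1) -> legal (Comb (i + 1)) X ->
  simulates X (Comb i) (Comb (i + 1)).
Proof.
  intros HI Hle1 HC; pose proof (comb_inv_legal X i HI) as Hi.
  destruct HI as [Hi2 Hprev Hcur _ _ _ _ _].
  pose proof (Hle1 (i + 1)).
  prove_simulation [Split (i + 1)].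
Qed.

Lemma comb_inv_commute_split X i k :
  comb_inv X i -> 1 <= k -> X k = 2 -> commute_at X (Comb i) (Split k).
Proof.
  intros HI Hk Hk2; pose proof (double_beyond X i k HI Hk Hk2).
  pose proof (comb_inv_legal X i HI) as HC.
  destruct HI as [Hi Hprev Hcur _ _ _ _ _].
  assert (HS : legal (Split k) X) by prove_legal.
  split; prove_legal.
Qed.

Lemma comb_inv_commute_comb X i j :
  comb_inv X i -> legal (Comb j) X -> i + 2 <= j -> commute_at X (Comb i) (Comb j).
Proof.
  intros HI HCj Hj; pose proof (comb_inv_legal X i HI) as HC.
  destruct HI as [Hi Hprev Hcur _ _ _ _ _].
  split; prove_legal.
Qed.

Definition bounded (X : state) (n : nat) : Prop :=
  forall Q, game_path X Q -> length Q <= n.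

Lemma bounded_next X n m : bounded X (S n) -> legal m X -> bounded (next m X) n.
Proof.
  intros HB Hm Q HQ.
  assert (HmQ : game_path X (m :: Q)) by (apply game_path_cons; auto).
  specialize (HB _ HmQ); simpl in HB; lia.
Qed.

(* Induction is on a bound for path lengths, because after a
   doubled part is split first the recursion runs on the path produced by
   [split_first_no_loss], not on a subpath of P. *)
Lemma min_comb_first_no_loss n X i P :
  bounded X n -> comb_inv X i -> game_path X P ->
  exists Q, game_path X (Comb i :: Q) /\ length P <= S (length Q).
Proof.
  revert X i P; induction n as [|n IH]; intros X i P HB HI HP;
    pose proof (comb_inv_legal X i HI) as HCi.
  - destruct P as [|m P]; [exfalso; exact (game_path_nil X _ HP HCi)|].
    specialize (HB _ HP); simpl in HB; lia.
  - destruct (classic (exists k, 1 <= k /\ X k = 2)) as [[k [Hk Hk2]]|Hno].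
    + assert (HSk : legal (Split k) X)
        by (pose proof (double_beyond X i k HI Hk Hk2); pose proof (ci_index _ _ HI); simpl; lia).
      destruct (split_first_no_loss P X (Split k) I HSk HP) as [Q1 [HQ1 Hl1]].
      apply game_path_cons in HQ1 as [_ HQ1].
      destruct (IH _ i Q1 (bounded_next _ _ _ HB HSk) (comb_inv_after_split X i k HI Hk Hk2) HQ1)
        as [Q2 [HQ2 Hl2]].
      exists (Split k :: Q2); split; [|simpl; lia].
      apply extend_by_commutation; auto using comb_inv_commute_split.
    + assert (Hle1 : forall k, 1 <= k -> X k <= 1)
        by (intros k Hk; pose proof (ci_le2 _ _ HI k Hk); assert (X k <> 2) by eauto; lia).
      destruct P as [|m P]; [exfalso; exact (game_path_nil X _ HP HCi)|].
      apply game_path_cons in HP as [Hm HP].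
      destruct (first_move_under_inv X i m HI Hle1 Hm) as [j [-> Hij]].
      destruct (Nat.eq_dec j i) as [->|Hji]; [exists P; split; [apply game_path_cons; auto | simpl; lia]|].
      destruct (Nat.eq_dec j (i + 1)) as [->|Hji1].
      * destruct (extend_by_simulation X _ _ P (comb_shift_simulation X i HI Hle1 Hm) HP)
          as [Q [HQ Hl]].
        exists Q; split; [exact HQ | simpl; lia].
      * destruct (IH _ i P (bounded_next _ _ _ HB Hm) (comb_inv_after_comb X i j HI Hle1 Hm ltac:(lia)) HP)
          as [Q2 [HQ2 Hl2]].
        exists (Comb j :: Q2); split; [|simpl; lia].
        apply extend_by_commutation; auto.
        apply comb_inv_commute_comb; [exact HI | exact Hm | lia].
Qed.

Definition split_available (X : state) : Prop := exists s, split_class s /\ legal s X.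

Lemma sf_choice_split X s : split_class s -> legal s X -> sf_choice X s.
Proof. intros Hs Hl; split; [auto | intros Hn; exfalso; apply Hn; eauto]. Qed.

Lemma sf_choice_min_comb X i :
  ~ split_available X -> 2 <= i -> (forall j, 2 <= j -> legal (Comb j) X -> i <= j) ->
  sf_choice X (Comb i).
Proof. intros Hn Hi Hmin; split; [intros Hc; contradiction | eauto]. Qed.

Lemma no_split_at_most_one X : ~ split_available X -> forall k, 1 <= k -> X k <= 1.
Proof.
  intros Hn k Hk; destruct (le_lt_dec (X k) 1) as [|Hgt]; [auto|exfalso; apply Hn].
  destruct (Nat.eq_dec k 1) as [->|Hk1];
    [exists (Comb 1) | exists (Split k)]; simpl; split; auto; lia.
Qed.

Lemma least_comb X j :
  2 <= j -> legal (Comb j) X ->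
  exists i, 2 <= i /\ legal (Comb i) X /\ forall j', 2 <= j' -> legal (Comb j') X -> i <= j'.
Proof.
  intros Hj HC.
  destruct (dec_inh_nat_subset_has_unique_least_element (fun i => 2 <= i /\ legal (Comb i) X))
    as [i [[[Hi HCi] Hmin] _]]; [intros; apply classic | eauto |].
  exists i; split; [exact Hi|]; split; [exact HCi|]; auto.
Qed.

Lemma comb_inv_of_least X i :
  ~ split_available X -> 2 <= i -> legal (Comb i) X ->
  (forall j, 2 <= j -> legal (Comb j) X -> i <= j) -> comb_inv X i.
Proof.
  intros Hn Hi HC Hmin; pose proof (no_split_at_most_one X Hn) as Hle1.
  assert (Hpair : forall k, 2 <= k < i -> X (k - 1) = 0 \/ X k = 0).
  { intros k Hk; destruct (classic (1 <= X (k - 1) /\ 1 <= X k)) as [[H1 H2]|Hc]; [|lia].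
    assert (i <= k) by (apply Hmin; simpl; lia); lia. }
  pose proof (Hle1 i); pose proof (Hle1 (i - 1)); simpl in HC.
  constructor; [lia | lia | lia | intros k Hk; apply Hle1; lia | exact Hpair | | |];
    intros k; pose proof (Hle1 k); lia.
Qed.

Lemma sf_first_move X n m P :
  bounded X n -> game_path X (m :: P) ->
  exists m0 Q, sf_choice X m0 /\ game_path X (m0 :: Q) /\ length P <= length Q.
Proof.
  intros HB HP.
  destruct (classic (split_available X)) as [[s [Hs Hsl]]|Hn].
  - destruct (split_first_no_loss (m :: P) X s Hs Hsl HP) as [Q [HQ Hl]].
    exists s, Q; split; [apply sf_choice_split; auto | split; [exact HQ | simpl in Hl; lia]].
  - pose proof HP as HmP; apply game_path_cons in HmP as [Hm _].
    destruct m as [j|b]; [|exfalso; apply Hn; exists (Split b); simpl; auto].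
    destruct (Nat.eq_dec j 1) as [->|Hj1]; [exfalso; apply Hn; exists (Comb 1); simpl; auto|].
    destruct (least_comb X j ltac:(simpl in Hm; lia) Hm) as [i [Hi [HCi Hmin]]].
    destruct (min_comb_first_no_loss n X i (Comb j :: P) HB (comb_inv_of_least X i Hn Hi HCi Hmin) HP)
      as [Q [HQ Hl]].
    exists (Comb i), Q; split; [apply sf_choice_min_comb; auto | split; [exact HQ | simpl in Hl; lia]].
Qed.

Lemma sf_path_of_max_length L X P :
  bounded X L -> game_path X P -> length P = L ->
  exists Q, game_path X Q /\ follows_sf X Q /\ length Q = L.
Proof.
  revert X P; induction L as [|L IH]; intros X P HB HP HL.
  - destruct P; [|discriminate]; exists []; simpl; auto.
  - destruct P as [|m P]; [discriminate|]; simpl in HL.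
    destruct (sf_first_move X (S L) m P HB HP) as [m0 [Q [Hsf [HQ Hl]]]].
    pose proof (HB _ HQ) as HQlen; simpl in HQlen.
    apply game_path_cons in HQ as [Hm0 HQ].
    destruct (IH (next m0 X) Q (bounded_next X L m0 HB Hm0) HQ ltac:(lia)) as [Q' [HQ' [Hsf' HQ'len]]].
    exists (m0 :: Q'); split; [apply game_path_cons; auto | split; [simpl; auto | simpl; lia]].
Qed.

(* Either P is not a longest path from G, or a Split-First path matches it. *)
Theorem lemma2p3 (G : state) (P : list move) :
  is_state G ->
  game_path G P ->
  ~ follows_sf G P ->
  (exists Q, game_path G Q /\ length P < length Q) \/
  (exists Q, game_path G Q /\ follows_sf G Q /\ length Q = length P).
Proof.
  intros _ HP _.
  destruct (classic (exists Q, game_path G Q /\ length P < length Q)) as [Hlonger|Hmax];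
    [left; exact Hlonger | right].
  apply (sf_path_of_max_length (length P) G P); auto.
  intros Q HQ; destruct (le_lt_dec (length Q) (length P)); [auto | exfalso; eauto].
Qed.
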